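(* Let $P=(O,D,T)$ be an ODT triple and let $\theta$ be a number (in the paper's use, the $k$-th largest value of $\mathrm{cnt}$ among the level-$\ell$ triples generated so far). If $$P.\mathrm{cnt}+\max\{|P.D|\cdot|P.T|,\ |P.O|\cdot|P.T|,\ |P.O|\cdot|P.D|\}\le\theta,$$ then every minimal generalization $\mathrm{CandP}$ of $P$ satisfies $\mathrm{CandP}.\mathrm{cnt}\le\theta$; hence no minimal generalization of $P$ can enter the set of top-$k$ level-$\ell$ ODT triples (ranked by $\mathrm{cnt}$).
   Context: Let $V$ be a finite set of atomic regions, with an undirected neighborhood graph $G=(V,E)$, and let $S=\{1,\dots,M\}$ be the linearly ordered set of atomic timeslots. A region is a nonempty subset $R\subseteq V$ whose induced subgraph in $G$ is connected; a timeslot is a nonempty set of consecutive atomic timeslots. An ODT triple is $P=(O,D,T)$ with $O,D$ regions, $O\cap D=\emptyset$, and $T$ a timeslot; we write $P.O=O$, $P.D=D$, $P.T=T$. Its level is $|O|+|D|+|T|$. A fixed set $\mathcal{A}$ of atomic triples $(o,d,t)\in V\times V\times S$ with $o\ne d$ is given (the atomic patterns). For an ODT triple $P$, $P.\mathrm{cnt}$ denotes the number of atomic triples $(o,d,t)\in O\times D\times T$ that belong to $\mathcal{A}$. A region $R_1$ is a minimal generalization of a region $R_2$ if $R_2\subset R_1$ and $R_1\setminus R_2$ consists of a single atomic region; a timeslot $T_1$ is a minimal generalization of $T_2$ if $T_2\subset T_1$ and $T_1\setminus T_2$ is a single atomic timeslot. An ODT triple $P_1$ is a minimal generalization of $P_2$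 if two of its three components equal those of $P_2$ and the remaining component of $P_1$ is a minimal generalization of the corresponding component of $P_2$. *)

From mathcomp Require Import all_boot.
Set Implicit Arguments. Unset Strict Implicit. Unset Printing Implicit Defensive.

Section ODT.
Variables (V : finType) (e : rel V) (M : nat).

Definition induced_rel (R : {set V}) : rel V :=
  [rel x y | [&& e x y, x \in R & y \in R]].

Definition is_region (R : {set V}) : Prop :=
  R != set0 /\ forall x y, x \in R -> y \in R -> connect (induced_rel R) x y.

Definition is_timeslot (T : {set 'I_M}) : Prop :=
  T != set0 /\ forall i j k : 'I_M, i \in T -> k \in T -> i <= j -> j <= k -> j \in T.

Record odt := ODT { odtO : {set V}; odtD : {set V}; odtT : {set 'I_M} }.

Definition is_odt (P : odt) : Prop :=
  [/\ is_region (odtO P), is_region (odtD P),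
      [disjoint odtO P & odtD P] & is_timeslot (odtT P)].

Definition cnt (A : {set V * V * 'I_M}) (P : odt) : nat :=
  #|[set x in A | [&& x.1.1 \in odtO P, x.1.2 \in odtD P & x.2 \in odtT P]]|.

Definition region_min_gen (R1 R2 : {set V}) : Prop :=
  is_region R1 /\ R2 \proper R1 /\ #|R1 :\: R2| = 1.

Definition timeslot_min_gen (T1 T2 : {set 'I_M}) : Prop :=
  is_timeslot T1 /\ T2 \proper T1 /\ #|T1 :\: T2| = 1.

Definition odt_min_gen (P1 P2 : odt) : Prop :=
  is_odt P1 /\
  [\/ [/\ region_min_gen (odtO P1) (odtO P2), odtD P1 = odtD P2 & odtT P1 = odtT P2],
      [/\ odtO P1 = odtO P2, region_min_gen (odtD P1) (odtD P2) & odtT P1 = odtT P2]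
    | [/\ odtO P1 = odtO P2, odtD P1 = odtD P2 & timeslot_min_gen (odtT P1) (odtT P2)]].

End ODT.

From mathcomp Require Import all_boot.

Set Implicit Arguments.
Unset Strict Implicit.
Unset Printing Implicit Defensive.

(* The atomic triples counted by an ODT triple are those of A in the box
   O x D x T.  Enlarging one component by a single element adds to the box a
   slab of size |D||T|, |O||T| or |O||D|, so the count grows by at most the
   size of that slab.  Nothing about regions, timeslots or the graph is used:
   only that a minimal generalization adds exactly one element to one
   component. *)

Lemma card_setI_le_diff (T : finType) (A B B' : {set T}) :
  #|A :&: B'| <= #|A :&: B| + #|B' :\: B|.
Proof.
apply: leq_trans (leq_card_setU _ _); apply: subset_leq_card.
by apply/subsetP => x; rewrite !inE; case: (x \in A); case: (x \in B).
Qed.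

Lemma setX3D_sub (T1 T2 T3 : finType) (X X' : {set T1}) (Y Y' : {set T2})
    (Z Z' : {set T3}) :
  setX (setX X' Y') Z' :\: setX (setX X Y) Z
    \subset setX (setX (X' :\: X) Y') Z' :|: setX (setX X' (Y' :\: Y)) Z'
            :|: setX (setX X' Y') (Z' :\: Z).
Proof.
apply/subsetP => -[[x y] z]; rewrite !inE /=.
by case: (x \in X); case: (y \in Y); case: (z \in Z);
   case: (x \in X'); case: (y \in Y'); case: (z \in Z').
Qed.

Section Count.
Variables (V : finType) (M : nat) (A : {set V * V * 'I_M}).

Definition odt_box (P : odt V M) : {set V * V * 'I_M} :=
  setX (setX (odtO P) (odtD P)) (odtT P).

Lemma cntE (P : odt V M) : cnt A P = #|A :&: odt_box P|.
Proof. by apply: eq_card => -[[o d] t]; rewrite !inE -andbA. Qed.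

Lemma cnt_le_diff (O O' D D' : {set V}) (T T' : {set 'I_M}) :
  cnt A (ODT O' D' T') <= cnt A (ODT O D T)
    + #|O' :\: O| * #|D'| * #|T'| + #|O'| * #|D' :\: D| * #|T'|
    + #|O'| * #|D'| * #|T' :\: T|.
Proof.
rewrite !cntE; apply: leq_trans (card_setI_le_diff A (odt_box (ODT O D T)) _) _.
rewrite -!addnA leq_add2l -!cardsX addnA.
apply: leq_trans (subset_leq_card (setX3D_sub _ _ _ _ _ _)) _.
apply: leq_trans (leq_card_setU _ _) _; rewrite leq_add2r.
exact: leq_card_setU.
Qed.

End Count.

Theorem lemma2 (V : finType) (e : rel V) (M : nat)
  (e_sym : symmetric e) (e_irr : irreflexive e)
  (A : {set V * V * 'I_M})
  (hA : forall x, x \in A -> x.1.1 != x.1.2)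
  (P : odt V M) (hP : is_odt e P) (theta : nat)
  (hth : cnt A P + maxn (#|odtD P| * #|odtT P|)
                        (maxn (#|odtO P| * #|odtT P|) (#|odtO P| * #|odtD P|)) <= theta) :
  forall CandP : odt V M, odt_min_gen e CandP P -> cnt A CandP <= theta.
Proof.
case: P hP hth => O D T _ /= hth [O' D' T'] [_ /= gen].
apply: leq_trans (cnt_le_diff A O O' D D' T T') (leq_trans _ hth).
case: gen => [[[_ [_ ->]] -> ->] | [-> [_ [_ ->]] ->] | [-> -> [_ [_ ->]]]];
  rewrite !setDv !cards0 !muln0 !mul0n !addn0 ?add0n ?mul1n ?muln1;
  by rewrite leq_add2l !leq_max leqnn ?orbT.
Qed.
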